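(* ODH satisfies the lower quota. Let $\sigma=\langle\mathcal V,\mathcal C,S,B\rangle$ be an approval-based multi-winner election, let $\mathcal A\subseteq\mathcal C$, and let $\{y_1,\dots,y_n\}\subseteq2^{\mathcal C}$ be such that: - $\mathcal A\subseteq y_j$ for all $j=1,\dots,n$; - with $q=\frac{\sum_{j=1}^nB(y_j)}{|\mathcal V|}S$, one has $|\mathcal A|\ge\lfloor q\rfloor$. Then every output $W$ of ODH on $\sigma$ (under any tie-breaking) satisfies $\big|W\cap\bigcup_{j=1}^ny_j\big|\ge\lfloor q\rfloor$.
   Context: An approval-based multi-winner election is a tuple $\sigma=\langle \mathcal V,\mathcal C,S,B\rangle$, where $\mathcal V$ is a finite set of agents, $\mathcal C$ is a finite set of candidates, $1\le S\le|\mathcal C|$ is an integer, and $B:2^{\mathcal C}\to\mathbb N$ gives, for each $\mathcal A\subseteq\mathcal C$, the number $B(\mathcal A)$ of agents whose ballot is exactly $\mathcal A$ (with $\sum_{\mathcal A}B(\mathcal A)\le|\mathcal V|$). For a non-empty $\mathcal A\subseteq\mathcal C$, the family $\mathfrak F_{\sigma,\mathcal A}$ is the set of all $F:2^{\mathcal C}\times\mathcal A\to\mathbb R$ such that: - $F(y,c)\ge0$ for all $y$ and $c$; - $F(y,c)=0$ if $c\notin y$; - $\sum_{c\in\mathcal A\cap y}F(y,c)=B(y)$ whenever $y\cap\mathcal A\neq\emptyset$. We write $\mathrm{Supp}_F(c)=\sum_yF(y,c)$ and $\mathrm{maxMin}(\sigma,\mathcal A)=\sup_{F\in\mathfrak F_{\sigma,\mathcal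 A}}\min_{c\in\mathcal A}\mathrm{Supp}_F(c)$. We also write $\mathfrak F^{\mathrm{opt}}_{\sigma,\mathcal A}=\{F\in\mathfrak F_{\sigma,\mathcal A}:\mathrm{Supp}_F(c)\ge\mathrm{maxMin}(\sigma,\mathcal A)\ \forall c\in\mathcal A\}$. The Open D'Hondt (ODH) rule proceeds as follows. Start with $\mathcal C_e=\emptyset$ and repeat $S$ times: - for each $c\in\mathcal C\setminus\mathcal C_e$, choose any $F\in\mathfrak F^{\mathrm{opt}}_{\sigma,\mathcal C_e\cup\{c\}}$ and set $s_c=\mathrm{Supp}_F(c)$; - then add to $\mathcal C_e$ some $w$ maximizing $s_w$ (ties broken arbitrarily). Finally, output $\mathcal C_e$. *)

From HB Require Import structures.
From mathcomp Require Import all_boot all_order all_algebra.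
Set Implicit Arguments. Unset Strict Implicit. Unset Printing Implicit Defensive.
Import Order.TTheory GRing.Theory Num.Theory.
Local Open Scope ring_scope.

Section ODH.
Variables (R : realFieldType) (C : finType) (B : {set C} -> nat).

(* F : 2^C x A -> R, represented as a function on {set C} -> C -> R
   which vanishes outside A. *)
Definition in_family (A : {set C}) (F : {set C} -> C -> R) : Prop :=
  forall (y : {set C}) (c : C),
    [/\ 0 <= F y c,
        (c \notin y -> F y c = 0),
        (c \notin A -> F y c = 0)
      & (y :&: A != set0 -> \sum_(d in A :&: y) F y d = (B y)%:R)].

Definition Supp (F : {set C} -> C -> R) (c : C) : R := \sum_(y : {set C}) F y c.

(* F is in F^opt_{sigma,A}: F is in the family and for every c in A,
   Supp_F(c) >= maxMin(sigma,A), i.e. Supp_F(c) >= min_{c' in A} Supp_G(c')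
   for every G in the family (sup unfolded as least upper bound). *)
Definition is_opt (A : {set C}) (F : {set C} -> C -> R) : Prop :=
  in_family A F /\
  forall G, in_family A G -> forall c, c \in A ->
    exists2 c', c' \in A & Supp G c' <= Supp F c.

Definition odh_step (Ce : {set C}) (w : C) : Prop :=
  w \notin Ce /\
  exists s : C -> R,
    (forall c, c \notin Ce -> exists F, is_opt (c |: Ce) F /\ s c = Supp F c) /\
    (forall c, c \notin Ce -> s c <= s w).

(* W is a possible output of ODH with committee size S
   (for some choice of the F's and some tie-breaking). *)
Definition odh_output (S : nat) (W : {set C}) : Prop :=
  exists ws : seq C,
    [/\ size ws = S,
        (forall (k : nat) (w0 : C), (k < S)%N ->
           odh_step [set x in take k ws] (nth w0 ws k))
      & W = [set x in ws]].

End ODH.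

(* Put l := N / (m + 1), where N is the weight of the ballots in Y and m the
   number of winners in their union, and suppose m < q, so that some a in A
   is never elected.  ODH preserves the invariant that some admissible F gives
   every committee member support at least l.  Indeed a can always join the
   committee with support at least l: every ballot of Y caps what it gives to
   each member at l and hands the rest of its weight to a, which is at least
   N - m l >= l.  So the winner of each round scores at least l, and the
   optimality of its F then keeps the whole new committee at support >= l.
   Adding a to the final committee gives (S + 1) l <= |V|, contradicting
   (m + 1) |V| <= S N. *)
From HB Require Import structures.
From mathcomp Require Import all_boot all_order all_algebra.
From mathcomp Require Import lra zify.
Import Order.TTheory GRing.Theory Num.Theory.

Set Implicit Arguments. Unset Strict Implicit. Unset Printing Implicit Defensive.
Local Open Scope ring_scope.

Lemma sum_setI_supported (R : nmodType) (T : finType) (A y : {set T}) (f : T -> R) :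
  (forall d, d \notin y -> f d = 0) -> \sum_(d in A :&: y) f d = \sum_(d in A) f d.
Proof.
move=> f0; rewrite [RHS](big_setID y) /= [X in _ + X]big1 ?addr0 //.
by move=> d; rewrite in_setD => /andP [/f0].
Qed.

Lemma set_take_nth (T : finType) (x0 : T) (s : seq T) k : (k < size s)%N ->
  [set x in take k.+1 s] = nth x0 s k |: [set x in take k s].
Proof.
by move=> ks; apply/setP => x; rewrite (take_nth x0 ks) !inE mem_rcons in_cons.
Qed.

Section Families.
Variables (R : realFieldType) (C : finType) (B : {set C} -> nat).
Implicit Types (X y : {set C}) (F G : {set C} -> C -> R) (l : R).

Definition maxMin_ge X l :=
  exists2 G, in_family B X G & {in X, forall c, l <= Supp G c}.

Section Family.
Variables (X : {set C}) (G : {set C} -> C -> R).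
Hypothesis HG : in_family B X G.

Lemma family_ge0 y c : 0 <= G y c.
Proof. by case: (HG y c). Qed.

Lemma family_notin y c : c \notin y -> G y c = 0.
Proof. by case: (HG y c). Qed.

Lemma family_notinX y c : c \notin X -> G y c = 0.
Proof. by case: (HG y c). Qed.

Lemma family_sum y : y :&: X != set0 -> \sum_(d in X) G y d = (B y)%:R.
Proof.
move=> yX; have /set0Pn [c _] := yX; case: (HG y c) => _ _ _ /(_ yX) <-.
by rewrite sum_setI_supported // => d; apply: family_notin.
Qed.

Lemma family_sum_le y : \sum_(d in X) G y d <= (B y)%:R.
Proof.
have [yX|yX] := eqVneq (y :&: X) set0; last by rewrite family_sum.
rewrite big1 ?ler0n // => d dX; apply: family_notin; apply: contra_eqN yX => dy.
by apply/set0Pn; exists d; rewrite inE dy.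
Qed.

Lemma Supp_ge0 c : 0 <= Supp G c.
Proof. by apply: sumr_ge0 => y _; apply: family_ge0. Qed.

Lemma sum_Supp_le : \sum_(c in X) Supp G c <= (\sum_y B y)%:R.
Proof.
rewrite /Supp exchange_big /= natr_sum; apply: ler_sum => y _.
exact: family_sum_le.
Qed.

End Family.

Lemma maxMin_ge_card X l : maxMin_ge X l -> #|X|%:R * l <= (\sum_y B y)%:R.
Proof.
case=> G HG Gl; apply: le_trans (sum_Supp_le HG).
by rewrite mulr_natl -sumr_const; apply: ler_sum.
Qed.

Lemma is_opt_ge X F l : is_opt B X F -> maxMin_ge X l ->
  {in X, forall c, l <= Supp F c}.
Proof.
by case=> _ Fopt [G HG Gl] c cX; have [c' /Gl lc'] := Fopt G HG c cX; apply: le_trans.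
Qed.

Definition mix (t : R) F G y c := t * F y c + (1 - t) * G y c.

Lemma in_family_mix X t F G : in_family B X F -> in_family B X G ->
  0 <= t <= 1 -> in_family B X (mix t F G).
Proof.
move=> HF HG /andP [t0 t1] y c; rewrite /mix; split.
- by rewrite addr_ge0 // mulr_ge0 ?subr_ge0 // (family_ge0 HF, family_ge0 HG).
- by move=> cy; rewrite (family_notin HF cy) (family_notin HG cy) !mulr0 addr0.
- by move=> cX; rewrite (family_notinX HF _ cX) (family_notinX HG _ cX) !mulr0 addr0.
- move=> yX; rewrite sum_setI_supported; last first.
    by move=> d dy; rewrite (family_notin HF dy) (family_notin HG dy) !mulr0 addr0.
  by rewrite big_split /= -!mulr_sumr !family_sum // -mulrDl subrKC mul1r.
Qed.

Lemma Supp_mix t F G c : Supp (mix t F G) c = t * Supp F c + (1 - t) * Supp G c.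
Proof. by rewrite /Supp big_split /= -!mulr_sumr. Qed.

Definition reroute a X G (h : {set C} -> C -> R) y c : R :=
  if c \in X then G y c * h y c
  else if (c == a) && (a \in y) then (B y)%:R - \sum_(k in X) G y k * h y k
  else 0.

Section Reroute.
Variables (a : C) (X : {set C}) (G : {set C} -> C -> R) (h : {set C} -> C -> R).
Hypotheses (aX : a \notin X) (HG : in_family B X G).
(* A ballot that does not approve [a] cannot give it the freed weight. *)
Hypotheses (h01 : forall y c, 0 <= h y c <= 1) (h1 : forall y c, a \notin y -> h y c = 1).

Lemma sum_reroute_le y : \sum_(k in X) G y k * h y k <= (B y)%:R.
Proof.
apply: le_trans (family_sum_le HG y); apply: ler_sum => k _.
by have /andP [_ ?] := h01 y k; rewrite ler_piMr // (family_ge0 HG).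
Qed.

Lemma in_family_reroute : in_family B (a |: X) (reroute a X G h).
Proof.
have out y c : c \notin y -> reroute a X G h y c = 0.
  move=> cy; rewrite /reroute (family_notin HG cy) mul0r; case: ifP => // _.
  by case: (c =P a) => [ca|] //=; rewrite -ca (negbTE cy).
move=> y c; split; [|exact: out| |].
- rewrite /reroute; case: ifP => _.
    by have /andP [? _] := h01 y c; rewrite mulr_ge0 // (family_ge0 HG).
  by case: ifP => // _; rewrite subr_ge0 sum_reroute_le.
- by rewrite in_setU1 negb_or => /andP [ca /negbTE cX]; rewrite /reroute cX (negbTE ca).
move=> yaX; rewrite sum_setI_supported; last exact: out.
rewrite big_setU1 //= /reroute (negbTE aX) eqxx.
rewrite [X in _ + X](eq_bigr (fun k => G y k * h y k)) => [|k ->] //.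
have [ay|ay] := boolP (a \in y); first by rewrite subrK.
rewrite add0r (eq_bigr (G y)) => [|k _]; last by rewrite h1 ?mulr1.
apply: family_sum => //; apply: contra_neq yaX => yX.
by apply/setP => d; rewrite !inE; case: eqP => [->|_]; rewrite ?(negbTE ay) // -in_setI yX inE.
Qed.

Lemma Supp_reroute c : c \in X -> Supp (reroute a X G h) c = \sum_y G y c * h y c.
Proof. by move=> cX; apply: eq_bigr => y _; rewrite /reroute cX. Qed.

Lemma Supp_reroute_new (Y : {set {set C}}) : {in Y, forall y, a \in y} ->
  \sum_(y in Y) ((B y)%:R - \sum_(k in X) G y k * h y k) <= Supp (reroute a X G h) a.
Proof.
move=> aY; rewrite /Supp [X in _ <= X](bigID (mem Y)) /= -[X in X <= _]addr0.
apply: lerD; last by apply: sumr_ge0 => y _; exact: family_ge0 in_family_reroute y a.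
by apply: ler_sum => y yY; rewrite /reroute (negbTE aX) eqxx aY.
Qed.

End Reroute.

Lemma maxMin_ge_setU1_opt X w l F : w \notin X -> maxMin_ge X l ->
  is_opt B (w |: X) F -> l <= Supp F w -> maxMin_ge (w |: X) l.
Proof.
move=> wX [G HG Gl] [HF Fopt] lw; exists F => //.
case: (arg_minP (Supp F) (setU11 w X)) => c0 c0wX c0min.
move=> c cwX; apply: le_trans (c0min c cwX); rewrite leNgt; apply/negP => mu_lt.
set mu := Supp F c0 in mu_lt c0min.
have mu0 : 0 <= mu := Supp_ge0 HF c0.
(* Moving a small weight t from F towards G' (which supports X at least l)
   lifts every support strictly above mu = min Supp F, against optimality. *)
pose t := (l - mu) / (l + l).
have tl : t * (l + l) = l - mu by rewrite divfK // gt_eqF // addr_gt0 //; lra.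
have t0 : 0 < t by rewrite divr_gt0 // ?subr_gt0 // addr_gt0; lra.
have t1 : t <= 1 by nra.
pose G' := reroute w X G (fun _ _ => 1).
have HG' : in_family B (w |: X) G' by apply: in_family_reroute => // *; rewrite ler01 lexx.
have HH : in_family B (w |: X) (mix t G' F) by apply: in_family_mix => //; lra.
have [c' c'wX] := Fopt _ HH c0 c0wX; apply/negP; rewrite -ltNge Supp_mix -/mu.
have SG0 : 0 <= Supp G' c' := Supp_ge0 HG' c'.
have SFc' := c0min c' c'wX.
case/setU1P: c'wX => [->|c'X] in SG0 SFc' *.
  have : (1 - t) * l <= (1 - t) * Supp F w by apply: ler_wpM2l; lra.
  have : 0 <= t * Supp G' w by apply: mulr_ge0; lra.
  nra.
have SG : l <= Supp G' c'.
  by rewrite /G' Supp_reroute // (eq_bigr (G^~ c')) => [|y _]; [apply: Gl | rewrite mulr1].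
have : t * l <= t * Supp G' c' by apply: ler_wpM2l; lra.
have : (1 - t) * mu <= (1 - t) * Supp F c' by apply: ler_wpM2l; lra.
nra.
Qed.

Definition cap l p : R := if p <= l then 1 else l / p.

Lemma cap_ge0 l p : 0 <= l -> 0 <= cap l p.
Proof. by move=> l0; rewrite /cap; case: (leP p l) => [_|lp]; rewrite ?ler01 // divr_ge0 //; lra. Qed.

Lemma cap_le1 l p : 0 <= l -> cap l p <= 1.
Proof. by move=> l0; rewrite /cap; case: (leP p l) => [_|lp] //; rewrite ler_pdivrMr ?mul1r; lra. Qed.

Lemma mul_cap l p : 0 <= l -> cap l p * p = Num.min p l.
Proof.
move=> l0; rewrite /cap; case: (leP p l) => [_|lp]; first by rewrite mul1r.
by rewrite divfK // gt_eqF //; lra.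
Qed.

Lemma maxMin_ge_setU1 (Y : {set {set C}}) X a l :
  a \notin X -> {in Y, forall y, a \in y} -> 0 <= l -> maxMin_ge X l ->
  (#|X :&: \bigcup_(y in Y) y|.+1)%:R * l <= (\sum_(y in Y) B y)%:R ->
  maxMin_ge (a |: X) l.
Proof.
set T := \bigcup_(y in Y) y => aX aY l0 [G HG Gl] hN.
pose p k := \sum_(y in Y) G y k.
pose h y c := if y \in Y then cap l (p c) else 1.
have h01 y c : 0 <= h y c <= 1.
  by rewrite /h; case: ifP; rewrite ?ler01 ?lexx // cap_ge0 ?cap_le1.
have h1 y c : a \notin y -> h y c = 1.
  by rewrite /h; case: ifP => // yY; rewrite aY.
have Supp_G k : Supp G k = p k + \sum_(y | y \notin Y) G y k by rewrite /Supp (bigID (mem Y)).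
have Supp_h k : \sum_y G y k * h y k = cap l (p k) * p k + \sum_(y | y \notin Y) G y k.
  rewrite (bigID (mem Y)) /= mulr_sumr; congr (_ + _); apply: eq_bigr => y yY.
    by rewrite /h yY mulrC.
  by rewrite /h (negbTE yY) mulr1.
exists (reroute a X G h); first exact: in_family_reroute.
move=> c; case/setU1P => [->|cX].
  apply: le_trans (Supp_reroute_new aX HG h01 h1 aY); rewrite sumrB -natr_sum.
  have -> : \sum_(y in Y) \sum_(k in X) G y k * h y k = \sum_(k in X) cap l (p k) * p k.
    rewrite exchange_big /=; apply: eq_bigr => k _; rewrite mulr_sumr.
    by apply: eq_bigr => y yY; rewrite /h yY mulrC.
  have capT : \sum_(k in X) cap l (p k) * p k <= #|X :&: T|%:R * l.
    rewrite (big_setID T) /= [X in _ + X]big1 ?addr0 => [|k]; last first.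
      rewrite inE => /andP [kT _]; rewrite /p big1 ?mulr0 // => y yY.
      by apply: (family_notin HG); apply: contra kT; apply: (subsetP (bigcup_sup _ yY)).
    rewrite mulr_natl -sumr_const; apply: ler_sum => k _.
    by rewrite mul_cap // ge_min lexx orbT.
  move: hN; rewrite -addn1 natrD mulrDl mul1r; lra.
rewrite Supp_reroute // Supp_h mul_cap //; have := Gl c cX; rewrite Supp_G.
have r0 : 0 <= \sum_(y | y \notin Y) G y c by apply: sumr_ge0 => y _; exact: family_ge0 HG y c.
by case: (leP (p c) l); lra.
Qed.

Lemma card_odh_output S W : odh_output R B S W -> #|W| = S.
Proof.
case=> ws [sz step ->]; case: ws sz step => [<- _|x0 s sz step]; first by rewrite set_nil cards0.
suff card_take k : (k <= S)%N -> #|[set x in take k (x0 :: s)]| = k.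
  by rewrite -(card_take S) // -sz take_size.
elim: k => [_|k IH kS]; first by rewrite take0 set_nil cards0.
rewrite (set_take_nth x0) ?sz // cardsU1 IH ?(ltnW kS) //.
by case: (step k x0 kS) => /negbTE ->.
Qed.

Lemma maxMin_ge_odh_output (Y : {set {set C}}) S W a l :
  odh_output R B S W -> a \notin W -> {in Y, forall y, a \in y} -> 0 <= l ->
  (#|W :&: \bigcup_(y in Y) y|.+1)%:R * l <= (\sum_(y in Y) B y)%:R ->
  maxMin_ge W l.
Proof.
case=> ws [sz step eW] aW aY l0 hN.
have prefixW k : [set x in take k ws] \subset W.
  by apply/subsetP => x; rewrite eW !inE => /mem_take.
suff prefix_ge k : (k <= S)%N -> maxMin_ge [set x in take k ws] l.
  by rewrite eW -(take_size ws) sz; apply: prefix_ge.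
elim: k => [_|k IH kS].
  rewrite take0 set_nil; exists (fun _ _ => 0) => [y c|c]; last by rewrite inE.
  by split=> //; rewrite setI0 eqxx.
have [wCe [s [sF smax]]] := step k a kS.
have {}IH := IH (ltnW kS); set Ce := [set x in take k ws] in IH wCe sF smax.
have aCe : a \notin Ce by apply: contra aW; apply: (subsetP (prefixW k)).
have hNk : (#|Ce :&: \bigcup_(y in Y) y|.+1)%:R * l <= (\sum_(y in Y) B y)%:R.
  apply: le_trans hN; apply: ler_wpM2r => //; rewrite ler_nat ltnS.
  exact: subset_leq_card (setSI _ (prefixW k)).
have [Fa [Faopt sa]] := sF a aCe.
have la : l <= s a.
  by rewrite sa; apply: (is_opt_ge Faopt (maxMin_ge_setU1 aCe aY l0 IH hNk)); apply: setU11.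
have [Fw [Fwopt sw]] := sF _ wCe.
rewrite (set_take_nth a) ?sz //; apply: maxMin_ge_setU1_opt wCe IH Fwopt _.
by rewrite -sw; apply: le_trans la (smax a aCe).
Qed.

End Families.

Theorem theorem5 (R : realFieldType) (V C : finType) (S : nat)
    (B : {set C} -> nat)
    (hS1 : (1 <= S)%N) (hS2 : (S <= #|C|)%N)
    (hB : (\sum_(y : {set C}) B y <= #|V|)%N)
    (A : {set C}) (Y : {set {set C}})
    (hAY : forall y, y \in Y -> A \subset y)
    (hq : ((S * \sum_(y in Y) B y) %/ #|V| <= #|A|)%N)
    (W : {set C}) (hW : odh_output R B S W) :
  ((S * \sum_(y in Y) B y) %/ #|V| <= #|W :&: \bigcup_(y in Y) y|)%N.
Proof.
set N := (\sum_(y in Y) B y)%N in hq *; set T := \bigcup_(y in Y) y.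
rewrite leqNgt; apply/negP => hlt; set m := #|W :&: T| in hlt.
have N0 : (0 < N)%N by rewrite lt0n; apply: contraTneq hlt => ->; rewrite muln0 div0n.
have [Y0|[y0 y0Y]] := set_0Vmem Y; first by move: N0; rewrite /N Y0 big_set0.
have AT : A \subset T := subset_trans (hAY y0 y0Y) (bigcup_sup y0 y0Y).
have [a /setDP [aA aW]] : exists a, a \in A :\: W.
  apply/set0Pn; rewrite -card_gt0; have := cardsID W A.
  have : (#|A :&: W| <= m)%N by rewrite setIC; exact: subset_leq_card (setIS W AT).
  lia.
have aY : {in Y, forall y : {set C}, a \in y} by move=> y /hAY /subsetP; apply.
pose l : R := N%:R / m.+1%:R.
have lm : l * m.+1%:R = N%:R by rewrite divfK // pnatr_eq0.
have l0 : 0 <= l by rewrite divr_ge0 ?ler0n.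
have hN : m.+1%:R * l <= N%:R by rewrite mulrC lm.
have := maxMin_ge_card (maxMin_ge_setU1 aW aY l0 (maxMin_ge_odh_output hW aW aY l0 hN) hN).
rewrite cardsU1 aW (card_odh_output hW) add1n => hSl.
have hSV : (S.+1 * N <= m.+1 * #|V|)%N.
  rewrite -(ler_nat R) !natrM -lm mulrA [X in _ <= X]mulrC.
  by apply: ler_wpM2r => //; apply: le_trans hSl _; rewrite ler_nat.
have := leq_divM (S * N) #|V|; have := leq_mul hlt (leqnn #|V|).
nia.
Qed.
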